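(* Let $f:\mathbb{R}^n\to\mathbb{R}$ be a continuous loss function which is strictly convex and $L$-smooth, with global minimum $w^*$, and let $E(w):=f(w)-f(w^* )$. Consider sequences $(w_i)$ generated by the Loss-Guarded L2O algorithm using deterministic gradient descent with step size $\frac{\alpha}{L}$, $\alpha\in\,]0,2[$, as the guarding mechanism. Then $E$ is a Lyapunov function for such sequences, i.e.: (1) $E$ is continuous; (2) $E(w)=0$ if and only if $w=w^*$; (3) $E(w)>0$ if and only if $w\neq w^*$; (4) $E(w_{i+1})\le E(w_i)$ for all $i\in\mathbb{N}$.
   Context: Loss-Guarded L2O algorithm with deterministic gradient descent: at each step $i$, an arbitrary black-box rule proposes a point $y_i$, the fallback proposes $z_i=w_i-\frac{\alpha}{L}\nabla f(w_i)$, and $w_{i+1}=y_i$ if $f(y_i)<f(z_i)$, otherwise $w_{i+1}=z_i$. $f$ is $L$-smooth means $f(y)\le f(x)+\langle\nabla f(x),y-x\rangle+\frac{L}{2}\|y-x\|_2^2$ for all $x,y$. *)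

From HB Require Import structures.
From mathcomp Require Import all_boot all_order all_algebra.
From mathcomp Require Import all_classical all_reals all_analysis.
Set Implicit Arguments. Unset Strict Implicit. Unset Printing Implicit Defensive.
Import Order.TTheory GRing.Theory Num.Theory.
Import numFieldNormedType.Exports.
Local Open Scope ring_scope.

Definition dotv {R : realType} {n : nat} (u v : 'rV[R]_n) : R := (u *m v^T) 0 0.

Definition norm2sq {R : realType} {n : nat} (v : 'rV[R]_n) : R := dotv v v.

Definition is_gradient {R : realType} {n : nat}
  (f : 'rV[R]_n -> R) (g : 'rV[R]_n -> 'rV[R]_n) : Prop :=
  forall x, differentiable f x /\ forall v, 'd f x v = dotv (g x) v.

Definition strictly_convex {R : realType} {n : nat} (f : 'rV[R]_n -> R) : Prop :=
  forall (x y : 'rV[R]_n) (t : R), x != y -> 0 < t < 1 ->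
    f (t *: x + (1 - t) *: y) < t * f x + (1 - t) * f y.

Definition L_smooth {R : realType} {n : nat}
  (f : 'rV[R]_n -> R) (g : 'rV[R]_n -> 'rV[R]_n) (L : R) : Prop :=
  forall x y, f y <= f x + dotv (g x) (y - x) + L / 2 * norm2sq (y - x).

(* Loss-Guarded L2O with gradient-descent fallback: y is the arbitrary
   black-box proposal sequence, w the generated iterates. *)
Definition LG_L2O_GD {R : realType} {n : nat}
  (f : 'rV[R]_n -> R) (g : 'rV[R]_n -> 'rV[R]_n) (alpha L : R)
  (y w : nat -> 'rV[R]_n) : Prop :=
  forall i : nat,
    let z := w i - (alpha / L) *: g (w i) in
    w i.+1 = if f (y i) < f z then y i else z.

From HB Require Import structures.
From mathcomp Require Import all_boot all_order all_algebra.
From mathcomp Require Import all_classical all_reals all_analysis.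
From mathcomp Require Import ring lra.
Set Implicit Arguments. Unset Strict Implicit. Unset Printing Implicit Defensive.
Import Order.TTheory GRing.Theory Num.Theory.
Import numFieldNormedType.Exports.
Local Open Scope ring_scope.

(* The guard keeps the better of the proposal and the gradient step, and a
   gradient step of length alpha/L with alpha in ]0,2[ never increases an
   L-smooth f; hence f, and with it E, is monotone along the iterates.
   Positivity of E away from w* is strict convexity applied at the midpoint
   of w and w*. *)

Section Vectors.
Variables (R : realType) (n : nat).
Implicit Types (u v : 'rV[R]_n) (c : R).

Lemma norm2sq_ge0 v : 0 <= norm2sq v.
Proof.
by rewrite /norm2sq /dotv mxE; apply: sumr_ge0 => j _; rewrite !mxE -expr2 sqr_ge0.
Qed.

Lemma dotvNr u v : dotv u (- v) = - dotv u v.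
Proof. by rewrite /dotv linearN /= mulmxN mxE. Qed.

Lemma dotvZr c u v : dotv u (c *: v) = c * dotv u v.
Proof. by rewrite /dotv linearZ /= -scalemxAr mxE. Qed.

Lemma norm2sqN v : norm2sq (- v) = norm2sq v.
Proof. by rewrite /norm2sq /dotv linearN /= mulNmx mulmxN opprK. Qed.

Lemma norm2sqZ c v : norm2sq (c *: v) = c ^+ 2 * norm2sq v.
Proof.
by rewrite /norm2sq /dotv linearZ /= -scalemxAl -scalemxAr !mxE mulrA -expr2.
Qed.

End Vectors.

Section GradientStep.
Variables (R : realType) (n : nat) (f : 'rV[R]_n -> R) (g : 'rV[R]_n -> 'rV[R]_n).
Variables (L alpha : R).
Hypothesis L_gt0 : 0 < L.
Hypothesis f_smooth : L_smooth f g L.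

Lemma gradient_step_decrease (x : 'rV[R]_n) :
  f (x - (alpha / L) *: g x) <= f x - alpha / L * (1 - alpha / 2) * norm2sq (g x).
Proof.
have := f_smooth x (x - (alpha / L) *: g x).
rewrite [_ - x]addrAC subrr add0r dotvNr dotvZr norm2sqN norm2sqZ /norm2sq.
suff -> : L / 2 * ((alpha / L) ^+ 2 * dotv (g x) (g x))
        = alpha / L * (alpha / 2) * dotv (g x) (g x) by move=> h; lra.
by field; rewrite gt_eqF.
Qed.

Lemma gradient_step_descent (x : 'rV[R]_n) : 0 <= alpha <= 2 ->
  f (x - (alpha / L) *: g x) <= f x.
Proof.
move=> /andP[alpha_ge0 alpha_le2]; apply: le_trans (gradient_step_decrease x) _.
by rewrite lerBlDr lerDl !mulr_ge0 ?norm2sq_ge0 ?invr_ge0 ?(ltW L_gt0) //; lra.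
Qed.

End GradientStep.

Lemma LG_L2O_GD_le_fallback (R : realType) (n : nat) (f : 'rV[R]_n -> R)
    (g : 'rV[R]_n -> 'rV[R]_n) (alpha L : R) (y w : nat -> 'rV[R]_n) i :
  LG_L2O_GD f g alpha L y w ->
  f (w i.+1) <= f (w i - (alpha / L) *: g (w i)).
Proof. by move=> /(_ i) ->; case: ifP => // /ltW. Qed.

Lemma strictly_convex_min_lt (R : realType) (n : nat) (f : 'rV[R]_n -> R)
    (wstar v : 'rV[R]_n) :
  strictly_convex f -> (forall u, f wstar <= f u) -> v != wstar ->
  f wstar < f v.
Proof.
move=> f_sconv f_min v_neq.
have half_in : 0 < (2^-1 : R) < 1 by apply/andP; split; lra.
have := le_lt_trans (f_min _) (f_sconv _ _ _ v_neq half_in).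
by move: (f v) (f wstar) => a b; lra.
Qed.

Theorem theorem2 (R : realType) (n : nat) (f : 'rV[R]_n -> R)
  (grad : 'rV[R]_n -> 'rV[R]_n) (L alpha : R) (wstar : 'rV[R]_n)
  (y w : nat -> 'rV[R]_n) :
  continuous f ->
  strictly_convex f ->
  is_gradient f grad ->
  0 < L ->
  L_smooth f grad L ->
  (forall v, f wstar <= f v) ->
  0 < alpha < 2 ->
  LG_L2O_GD f grad alpha L y w ->
  let E := fun v => f v - f wstar in
  [/\ continuous E,
      (forall v, E v = 0 <-> v = wstar),
      (forall v, 0 < E v <-> v <> wstar)
    & (forall i : nat, E (w i.+1) <= E (w i))].
Proof.
move=> f_cont f_sconv _ L_gt0 f_smooth f_min /andP[alpha_gt0 alpha_lt2] lg E.
have E_pos v : v <> wstar -> 0 < E v.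
  by move=> /eqP v_neq; rewrite subr_gt0 strictly_convex_min_lt.
have E_wstar : E wstar = 0 by rewrite /E subrr.
split.
- by move=> x; apply: continuous_comp (f_cont x) (cvgB cvg_id (cvg_cst _)).
- move=> v; split=> [E0|-> //]; apply: contra_eq E0 => /eqP v_neq.
  by rewrite gt_eqF ?E_pos.
- by move=> v; split=> [E_gt0 v_eq|/E_pos //]; move: E_gt0; rewrite v_eq E_wstar ltxx.
- move=> i; rewrite lerD2r; apply: le_trans (LG_L2O_GD_le_fallback i lg) _.
  by apply: (gradient_step_descent L_gt0 f_smooth); rewrite (ltW alpha_gt0) (ltW alpha_lt2).
Qed.
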